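(* For every $\varepsilon>0$ there exists $N$ such that for every $n\ge N$ the following holds: if $V$ is a set of $n$ vertices and $\mathcal{T}$ is a family (multiset, so repeated members are allowed and counted with multiplicity) of triangles on $V$ having no rainbow triangle, then $|\mathcal{T}|\le (1+\varepsilon)\frac{n^2}{8}$. Equivalently, $|\mathcal{T}|\le \frac{n^2}{8}(1+o(1))$ as $n\to\infty$.
   Context: A triangle on $V$ is a $3$-element subset $\{x,y,z\}\subseteq V$, identified with its edge set $\{\{x,y\},\{y,z\},\{x,z\}\}$. In a family (multiset) $\mathcal{T}$ of triangles, repeated copies of the same triangle are treated as different members. A rainbow triangle is a triangle $\{x,y,z\}$ on $V$ together with three distinct members $t_1,t_2,t_3$ of $\mathcal{T}$ (distinct as members of the multiset, though possibly equal as sets) such that $\{x,y\}$ is an edge of $t_1$, $\{y,z\}$ is an edge of $t_2$ and $\{x,z\}$ is an edge of $t_3$. *)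

(* Vertex set V = 'I_n (any n-element set, up to relabelling). *)
From HB Require Import structures.
From mathcomp Require Import all_boot all_order all_algebra.
From mathcomp Require Import reals.
Set Implicit Arguments. Unset Strict Implicit. Unset Printing Implicit Defensive.
Import Order.TTheory GRing.Theory Num.Theory.

Definition is_triangle (n : nat) (t : {set 'I_n}) : bool := #|t| == 3.

Definition edge_of (n : nat) (x y : 'I_n) (t : {set 'I_n}) : bool :=
  [&& x != y, x \in t & y \in t].

(* A family (multiset) of triangles is a list; members are its positions,
   so repeated copies count as distinct members. *)
Definition triangle_family (n : nat) (T : seq {set 'I_n}) : bool :=
  all (@is_triangle n) T.

Definition has_rainbow_triangle (n : nat) (T : seq {set 'I_n}) : Prop :=
  exists x y z : 'I_n,
    [/\ x != y, y != z & x != z] /\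
    exists i j k : 'I_(size T),
      [/\ i != j, j != k & i != k] /\
      [/\ edge_of x y (nth set0 T i), edge_of y z (nth set0 T j)
        & edge_of x z (nth set0 T k)].

(* Call a pair {x,y} pure if the members of T containing it are all copies of one
   triangle.  In the absence of rainbow triangles, every member has at most one impure
   pair; a pure pair lies in at most two members, and in only one if one of these members
   also has an impure pair; and pairwise pure pairs xy, yz, xz lie in a common member, so
   in the graph of pure pairs every edge lies in at most one triangle.  Give a pure pair
   the budget 2(3 + [it lies in a triangle of pure pairs]) and split it evenly among the
   members containing it: every member receives at least 12, whence 12|T| <= 3e + t,
   where e counts the ordered edges of the graph and t those lying in a triangle.
   In an n-vertex graph whose edges lie in at most one triangle, Cauchy-Schwarz on the
   degrees, with d(x) + d(y) <= n for edges outside triangles and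
   d(x) + d(y) + d(z) <= n + 3 for triangles, gives 6e + 2t <= 3n^2 + 8n.
   Hence |T| <= n^2/8 + n/3. *)

From HB Require Import structures.
From mathcomp Require Import all_boot all_order all_algebra.
From mathcomp Require Import reals.
From mathcomp Require Import zify lra.
Import Order.TTheory GRing.Theory Num.Theory.
Set Implicit Arguments. Unset Strict Implicit. Unset Printing Implicit Defensive.

Lemma leq_cards3 (U : finType) (A B C : {set U}) :
  #|A| + #|B| + #|C| <= #|A :|: B :|: C| + #|A :&: B| + #|A :&: C| + #|B :&: C|.
Proof.
have := cardsUI A B; have := cardsUI (A :|: B) C; rewrite setIUl.
have [leU _] := leq_card_setU (A :&: C) (B :&: C).
lia.
Qed.

Lemma card_gt2_other (U : finType) (A : {set U}) x y :
  2 < #|A| -> exists2 z, z \in A & z \notin [set x; y].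
Proof.
move=> A_gt2; apply/subsetPn; apply: contraTN A_gt2 => /subset_leq_card.
by rewrite -leqNgt cards2 => /leq_trans; apply; case: (x != y).
Qed.

Lemma nat_Cauchy_sum (J : finType) (F : J -> nat) :
  (\sum_j F j) ^ 2 <= #|J| * \sum_j F j ^ 2.
Proof.
have sum_const (m : nat) : \sum_(j : J) m = #|J| * m by rewrite sum_nat_const.
rewrite -(leq_pmul2l (isT : 0 < 2)) -mulnn big_distrl big_distrr /=.
have -> : 2 * (#|J| * \sum_j F j ^ 2) = \sum_i \sum_j (F i ^ 2 + F j ^ 2).
  under [RHS]eq_bigr do rewrite big_split /= sum_const.
  by rewrite big_split /= sum_const -big_distrr /=; lia.
apply: leq_sum => i _; rewrite !big_distrr /=; apply: leq_sum => j _.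
exact: nat_Cauchy.
Qed.

Lemma exchange_big13 (I : finType) (F : I -> I -> I -> nat) :
  \sum_x \sum_y \sum_z F x y z = \sum_z \sum_y \sum_x F x y z.
Proof.
rewrite exchange_big; under eq_bigr do rewrite exchange_big.
exact: exchange_big.
Qed.

Section TriangleSparseGraph.

Variables (I : finType) (G : rel I).
Hypothesis G_sym : symmetric G.
Hypothesis G_triangle_uniq : forall x y z z',
  G x y -> G x z -> G y z -> G x z' -> G y z' -> z = z'.

Definition deg x := #|[set y | G x y]|.
Definition common_nbr x y := [exists z, G x z && G y z].
Definition triangle x y z := [&& G x y, G y z & G x z].
Definition narcs := \sum_x \sum_y (G x y : nat).
Definition ntriangle_arcs := \sum_x \sum_y (G x y && common_nbr x y : nat).

Lemma deg_sum x : deg x = \sum_y (G x y : nat).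
Proof. by rewrite /deg -sum1dep_card big_mkcond; apply: eq_bigr => y _; case: (G x y). Qed.

Lemma common_nbrC x y : common_nbr x y = common_nbr y x.
Proof. by apply: eq_existsb => z; rewrite andbC. Qed.

Lemma triangleC12 x y z : triangle y x z = triangle x y z.
Proof. by rewrite /triangle (G_sym y x); case: (G x y); case: (G x z); case: (G y z). Qed.

Lemma triangleC13 x y z : triangle z y x = triangle x y z.
Proof.
rewrite /triangle (G_sym z y) (G_sym y x) (G_sym z x).
by case: (G x y); case: (G x z); case: (G y z).
Qed.

Lemma ntriangle_arcs_le : ntriangle_arcs <= narcs.
Proof. by apply: leq_sum => x _; apply: leq_sum => y _; case: (G x y) => /=; rewrite ?leq_b1. Qed.

Lemma common_nbr_count x y :
  (G x y && common_nbr x y : nat) = \sum_z (triangle x y z : nat).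
Proof.
case Gxy: (G x y); last by rewrite big1 // => z _; rewrite /triangle Gxy.
case: (boolP (common_nbr x y)) => [/existsP [z /andP [Gxz Gyz]] | ncom]; last first.
  rewrite big1 // => z _; apply/eqP; rewrite eqb0; apply: contra ncom.
  by case/and3P => _ Gyz Gxz; apply/existsP; exists z; rewrite Gxz.
rewrite (bigD1 z) //= big1 => [|u /negbTE zu]; first by rewrite /triangle Gxy Gxz Gyz.
apply/eqP; rewrite eqb0; apply: contraFN zu => /and3P [_ Gyu Gxu].
by rewrite (G_triangle_uniq Gxy Gxu Gyu Gxz Gyz).
Qed.

Lemma deg_disjoint x y : ~~ common_nbr x y -> deg x + deg y <= #|I|.
Proof.
move=> ncom; rewrite /deg -cardsUI.
have -> : [set u | G x u] :&: [set u | G y u] = set0.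
  apply/setP => z; rewrite !inE; apply/negbTE; apply: contra ncom => Gz.
  by apply/existsP; exists z.
by rewrite cards0 addn0 max_card.
Qed.

Lemma card_common_nbr x y z : G x y -> G x z -> G y z ->
  #|[set u | G x u] :&: [set u | G y u]| <= 1.
Proof.
move=> Gxy Gxz Gyz; rewrite -(cards1 z); apply: subset_leq_card.
apply/subsetP => u; rewrite !inE => /andP [Gxu Gyu].
by rewrite (G_triangle_uniq Gxy Gxu Gyu Gxz Gyz).
Qed.

Lemma deg_triangle x y z : triangle x y z -> deg x + deg y + deg z <= #|I| + 3.
Proof.
case/and3P => Gxy Gyz Gxz.
have Gyx : G y x by rewrite G_sym.
have Gzx : G z x by rewrite G_sym.
have Gzy : G z y by rewrite G_sym.
apply: leq_trans (leq_cards3 _ _ _) _; rewrite -!addnA leq_add ?max_card //.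
have := card_common_nbr Gxy Gxz Gyz; have := card_common_nbr Gxz Gxy Gzy.
have := card_common_nbr Gyz Gyx Gzx; lia.
Qed.

Lemma sum_deg_sq : \sum_x deg x ^ 2 = \sum_x \sum_y G x y * deg x.
Proof. by apply: eq_bigr => x _; rewrite -mulnn {1}deg_sum big_distrl. Qed.

Lemma sum_triangle_arcs_deg :
  3 * \sum_x \sum_y (G x y && common_nbr x y) * deg x <= (#|I| + 3) * ntriangle_arcs.
Proof.
pose S (f : I -> I -> I -> nat) := \sum_x \sum_y \sum_z triangle x y z * f x y z.
have Sx : \sum_x \sum_y (G x y && common_nbr x y) * deg x = S (fun x _ _ => deg x).
  by apply: eq_bigr => x _; apply: eq_bigr => y _; rewrite common_nbr_count big_distrl.
have Sy : S (fun x _ _ => deg x) = S (fun _ y _ => deg y).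
  rewrite /S [RHS]exchange_big; apply: eq_bigr => x _; apply: eq_bigr => y _.
  by apply: eq_bigr => z _; rewrite triangleC12.
have Sz : S (fun x _ _ => deg x) = S (fun _ _ z => deg z).
  rewrite /S [RHS]exchange_big13; apply: eq_bigr => x _; apply: eq_bigr => y _.
  by apply: eq_bigr => z _; rewrite triangleC13.
have S1 : ntriangle_arcs = S (fun _ _ _ => 1).
  apply: eq_bigr => x _; apply: eq_bigr => y _; rewrite common_nbr_count.
  by apply: eq_bigr => z _; rewrite muln1.
rewrite Sx S1 mulSn mul2n -addnn {1}Sy {1}Sz /S -!big_split big_distrr /=.
apply: leq_sum => x _; rewrite -!big_split big_distrr /=; apply: leq_sum => y _.
rewrite -!big_split big_distrr /=; apply: leq_sum => z _.
by case: (boolP (triangle x y z)) => [/deg_triangle|_] /=; rewrite ?mul1n ?muln1 ?mul0n //; lia.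
Qed.

Lemma sum_nontriangle_arcs_deg :
  2 * \sum_x \sum_y (G x y && ~~ common_nbr x y) * deg x
  <= #|I| * \sum_x \sum_y (G x y && ~~ common_nbr x y).
Proof.
have Sy : \sum_x \sum_y (G x y && ~~ common_nbr x y) * deg x
        = \sum_x \sum_y (G x y && ~~ common_nbr x y) * deg y.
  rewrite [RHS]exchange_big; apply: eq_bigr => x _; apply: eq_bigr => y _.
  by rewrite G_sym common_nbrC.
rewrite mul2n -addnn {2}Sy -big_split big_distrr /=; apply: leq_sum => x _.
rewrite -big_split big_distrr /=; apply: leq_sum => y _.
by case: (boolP (_ && _)) => // /andP [_ /deg_disjoint]; rewrite !mul1n muln1.
Qed.

Lemma sum_deg_sq_bound :
  6 * \sum_x deg x ^ 2 + #|I| * ntriangle_arcs <= 3 * #|I| * narcs + 6 * ntriangle_arcs.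
Proof.
have split_arcs : narcs = ntriangle_arcs + \sum_x \sum_y (G x y && ~~ common_nbr x y : nat).
  rewrite -big_split; apply: eq_bigr => x _; rewrite -big_split; apply: eq_bigr => y _.
  by case: (G x y); case: (common_nbr x y).
have split_deg : \sum_x \sum_y G x y * deg x =
    \sum_x \sum_y (G x y && common_nbr x y) * deg x
  + \sum_x \sum_y (G x y && ~~ common_nbr x y) * deg x.
  rewrite -big_split; apply: eq_bigr => x _; rewrite -big_split; apply: eq_bigr => y _.
  by case: (G x y); case: (common_nbr x y); rewrite /= ?mul0n ?addn0.
have := sum_triangle_arcs_deg; have := sum_nontriangle_arcs_deg.
rewrite sum_deg_sq split_deg split_arcs; nia.
Qed.

Lemma narcs_bound : 2 * (3 * narcs + ntriangle_arcs) <= 3 * #|I| ^ 2 + 8 * #|I|.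
Proof.
have narcs_deg : narcs = \sum_x deg x by apply: eq_bigr => x _; rewrite deg_sum.
have := nat_Cauchy_sum deg; rewrite -narcs_deg.
have := sum_deg_sq_bound; have := ntriangle_arcs_le.
move: (\sum_x deg x ^ 2) narcs ntriangle_arcs #|I| => s e t n t_le_e deg_sq_le CS.
have [e0 | e_gt0] := posnP e; first by subst e; move: t_le_e; rewrite leqn0 => /eqP ->.
have sq_le : 6 * e ^ 2 + n ^ 2 * t <= 3 * n ^ 2 * e + 6 * n * t by nia.
have e_le : 2 * e <= n ^ 2 + 2 * n.
  by rewrite -(leq_pmul2l (isT : 0 < 3)) -(leq_pmul2l e_gt0); nia.
by rewrite -(leq_pmul2l e_gt0); nia.
Qed.

End TriangleSparseGraph.

Lemma edge_ofC n (x y : 'I_n) (s : {set 'I_n}) : edge_of x y s = edge_of y x s.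
Proof. by rewrite /edge_of eq_sym [(x \in s) && _]andbC. Qed.

Lemma edge_of_sym n (x y : 'I_n) (s : {set 'I_n}) :
  edge_of x y s -> edge_of y x s.
Proof. by rewrite edge_ofC. Qed.

Lemma edge_of_mem n (x y : 'I_n) (s : {set 'I_n}) :
  x != y -> x \in s -> y \in s -> edge_of x y s.
Proof. by move=> *; apply/and3P. Qed.

Lemma leq_sum2 (J : finType) (F : J -> nat) a b : a != b -> F a + F b <= \sum_j F j.
Proof. by move=> ab; rewrite (bigD1 a) // (bigD1 b) 1?eq_sym //= addnA leq_addr. Qed.

Lemma leq_sum3 (J : finType) (F : J -> nat) a b c : a != b -> b != c -> a != c ->
  F a + F b + F c <= \sum_j F j.
Proof.
move=> ab bc ac; rewrite (bigD1 a) // (bigD1 b) 1?eq_sym // (bigD1 c) /=.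
  by rewrite !addnA leq_addr.
by rewrite eq_sym ac eq_sym bc.
Qed.

Lemma sum_edge_of_ge n (F : 'I_n -> 'I_n -> nat) (s : {set 'I_n}) a b c :
  (forall x y, F x y = F y x) -> a != b -> b != c -> a != c ->
  a \in s -> b \in s -> c \in s ->
  2 * (F a b + F a c + F b c) <= \sum_x \sum_y edge_of x y s * F x y.
Proof.
move=> FC ab bc ac a_s b_s c_s.
have row_ge x y z : y != z -> edge_of x y s -> edge_of x z s ->
    F x y + F x z <= \sum_u edge_of x u s * F x u.
  move=> yz exy exz; apply: leq_trans (leq_sum2 _ yz).
  by rewrite exy exz !mul1n.
apply: leq_trans (leq_sum3 _ ab bc ac).
have := row_ge a b c bc; have := row_ge b a c ac; have := row_ge c a b ab.
rewrite !(FC b a) !(FC c a) !(FC c b) !edge_of_mem // 1?eq_sym //; lia.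
Qed.

Section RainbowFreeFamily.

Variables (n : nat) (T : seq {set 'I_n}).
Hypothesis T_triangles : triangle_family T.
Hypothesis T_rainbow_free : ~ has_rainbow_triangle T.

Definition member (i : 'I_(size T)) := nth set0 T i.

Lemma card_member i : #|member i| = 3.
Proof. by apply/eqP; apply: (allP T_triangles); apply: mem_nth. Qed.

Lemma member_set3 i x y z : edge_of x y (member i) -> edge_of y z (member i) ->
  x != z -> member i = [set x; y; z].
Proof.
case/and3P => xy xi yi /and3P [yz _ zi] xz; apply/eqP; rewrite eq_sym eqEcard card_member.
apply/andP; split; first by apply/subsetP => u; rewrite !inE => /orP [/orP [] |] /eqP ->.
by apply/card_gt2P; exists x, y, z; rewrite !inE !eqxx !orbT (eq_sym z) xy yz xz.
Qed.

Lemma rainbow_free i j k x y z : i != j -> j != k -> i != k ->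
  edge_of x y (member i) -> edge_of y z (member j) -> edge_of x z (member k) -> False.
Proof.
move=> ij jk ik exy eyz exz; apply: T_rainbow_free; exists x, y, z; split.
  by case/and3P: exy; case/and3P: eyz; case/and3P: exz.
by exists i, j, k.
Qed.

Lemma rainbow_free_sets i j k x y z :
  member i != member j -> member j != member k -> member i != member k ->
  edge_of x y (member i) -> edge_of y z (member j) -> edge_of x z (member k) -> False.
Proof.
by move=> ij jk ik; apply: rainbow_free; [move: ij | move: jk | move: ik];
  apply: contraNneq => ->.
Qed.

Definition pure x y :=
  [exists i, [forall j, edge_of x y (member j) == (member j == member i)]].

Lemma pureC x y : pure x y = pure y x.
Proof. by apply: eq_existsb => i; apply: eq_forallb => j; rewrite edge_ofC. Qed.

Lemma pure_edge x y : pure x y -> exists i, edge_of x y (member i).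
Proof. by case/existsP => i /forallP /(_ i); rewrite eqxx eqb_id; exists i. Qed.

Lemma pure_neq x y : pure x y -> x != y.
Proof. by case/pure_edge => i /and3P []. Qed.

Lemma pure_member_eq x y i j : pure x y ->
  edge_of x y (member i) -> edge_of x y (member j) -> member i = member j.
Proof.
case/existsP => k /forallP e_k ei ej.
by move: (e_k i) (e_k j); rewrite ei ej => /eqP/esym/eqP -> /eqP/esym/eqP ->.
Qed.

Lemma impure_member x y i : ~~ pure x y -> edge_of x y (member i) ->
  exists2 k, edge_of x y (member k) & member k != member i.
Proof.
move=> /existsPn /(_ i) /forallPn [k]; case: (eqVneq (member k) (member i)) => [-> | ki].
  by rewrite eqb_id => /negbTE ->.
by rewrite eqbF_neg negbK => ek _; exists k.
Qed.

Lemma pure_triangle_member x y z : pure x y -> pure y z -> pure x z ->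
  exists i, [/\ x \in member i, y \in member i & z \in member i].
Proof.
move=> /pure_edge [i exy] /pure_edge [j eyz] /pure_edge [k exz].
have [xi yi] : x \in member i /\ y \in member i by case/and3P: exy.
have [yj zj] : y \in member j /\ z \in member j by case/and3P: eyz.
have [xk zk] : x \in member k /\ z \in member k by case/and3P: exz.
have [zi | zi] := boolP (z \in member i); first by exists i.
have [xj | xj] := boolP (x \in member j); first by exists j.
by case: (rainbow_free_sets _ _ _ exy eyz exz);
  [move: zi | move: xj | move: zi]; apply: contraNneq => ->.
Qed.

Lemma pure_triangle_uniq x y z z' :
  pure x y -> pure x z -> pure y z -> pure x z' -> pure y z' -> z = z'.
Proof.
move=> pxy pxz pyz pxz' pyz'.
have [i [xi yi zi]] := pure_triangle_member pxy pyz pxz.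
have [j [xj yj z'j]] := pure_triangle_member pxy pyz' pxz'.
have xy := pure_neq pxy.
have exy_i := edge_of_mem xy xi yi.
have := pure_member_eq pxy exy_i (edge_of_mem xy xj yj).
rewrite (member_set3 exy_i (edge_of_mem (pure_neq pyz) yi zi) (pure_neq pxz)).
move=> /setP /(_ z'); rewrite z'j !inE => /orP [/orP [] /eqP z'E | /eqP ->] //.
- by move: (pure_neq pxz'); rewrite z'E eqxx.
- by move: (pure_neq pyz'); rewrite z'E eqxx.
Qed.

Definition edge_mult x y := #|[set i | edge_of x y (member i)]|.

Lemma edge_multC x y : edge_mult x y = edge_mult y x.
Proof. by apply: eq_card => i; rewrite !inE edge_ofC. Qed.

Lemma pure_edge_mult x y : pure x y -> 0 < edge_mult x y <= 2.
Proof.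
move=> pxy; apply/andP; split.
  by have [i ei] := pure_edge pxy; rewrite card_gt0; apply/set0Pn; exists i; rewrite inE.
rewrite leqNgt; apply/negP => /card_gt2P [i [j [k [[ei ej ek] [ij jk ki]]]]].
rewrite !inE in ei ej ek.
have [z zi] : exists2 z, z \in member i & z \notin [set x; y].
  by apply: card_gt2_other; rewrite card_member.
rewrite !inE negb_or => /andP [zx zy].
have zj : z \in member j by rewrite -(pure_member_eq pxy ei ej).
have zk : z \in member k by rewrite -(pure_member_eq pxy ei ek).
have [_ _ yj] := and3P ej; have [_ xk _] := and3P ek.
by apply: (rainbow_free ij jk _ ei (edge_of_mem _ yj zj) (edge_of_mem _ xk zk));
  rewrite eq_sym.
Qed.

Lemma impure_neighbour_pure i a b c :
  edge_of a b (member i) -> edge_of b c (member i) -> edge_of a c (member i) ->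
  ~~ pure a b -> pure b c.
Proof.
move=> eab ebc eac nab; have [// | nbc] := boolP (pure b c); exfalso.
have [k1 e1 n1] := impure_member nab eab.
have [k2 e2 n2] := impure_member nbc ebc.
apply: (rainbow_free_sets _ n2 n1 e1 e2 eac); apply: contraNneq n1 => k12.
have ac : a != c by case/and3P: eac.
have ebc1 : edge_of b c (member k1) by rewrite k12.
by rewrite (member_set3 e1 ebc1 ac) (member_set3 eab ebc ac).
Qed.

Lemma pure_edge_mult1 i a b c :
  edge_of a b (member i) -> edge_of b c (member i) -> edge_of a c (member i) ->
  pure a b -> ~~ pure b c -> edge_mult a b = 1.
Proof.
move=> eab ebc eac pab nbc; apply/eqP; rewrite eqn_leq andbC.
have /andP [-> _] := pure_edge_mult pab.
rewrite leqNgt; apply/negP => /card_gt1P [j1 [j2 [ej1 ej2 j12]]]; rewrite !inE in ej1 ej2.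
have [k ek nk] := impure_member nbc ebc.
have mem_i m : edge_of a b (member m) -> member m = member i.
  by move=> em; apply: pure_member_eq pab em eab.
have j2k : j2 != k by apply: contraNneq nk => <-; rewrite (mem_i _ ej2).
have j1k : j1 != k by apply: contraNneq nk => <-; rewrite (mem_i _ ej1).
apply: (rainbow_free (y := a) j12 j2k j1k _ _ ek); first by rewrite edge_ofC.
by rewrite (mem_i _ ej2).
Qed.

(* Per orientation of a pure pair, each of the [edge_mult x y] (one or two) members
   containing it receives [2 / edge_mult x y] times the weight. *)
Definition arc_weight x y := 3 + common_nbr pure x y.
Definition share x y := if pure x y then arc_weight x y * 2 %/ edge_mult x y else 0.
Definition charge i := \sum_x \sum_y edge_of x y (member i) * share x y.

Lemma shareC x y : share x y = share y x.
Proof. by rewrite /share /arc_weight pureC edge_multC common_nbrC. Qed.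

Lemma share_ge x y : pure x y -> arc_weight x y <= share x y.
Proof.
move=> pxy; have /andP [m_gt0 m_le2] := pure_edge_mult pxy.
by rewrite /share pxy -{1}(mulnK (arc_weight x y) (isT : 0 < 2)) leq_div2l.
Qed.

Lemma share_mult1 x y : pure x y -> edge_mult x y = 1 -> share x y = arc_weight x y * 2.
Proof. by move=> pxy m1; rewrite /share pxy m1 divn1. Qed.

Lemma edge_mult_share x y : edge_mult x y * share x y <= 2 * (pure x y * arc_weight x y).
Proof.
rewrite /share; case: (pure x y); rewrite ?muln0 //= mul1n mulnC (mulnC 2).
exact: leq_divM.
Qed.

Lemma share_pure_triangle x y z : pure x y -> pure x z -> pure y z -> 4 <= share x y.
Proof.
move=> pxy pxz pyz; apply: leq_trans (share_ge pxy).
have cxy : common_nbr pure x y by apply/existsP; exists z; rewrite pxz pyz.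
by rewrite /arc_weight cxy.
Qed.

Lemma shares_impure i a b c :
  edge_of a b (member i) -> edge_of b c (member i) -> edge_of a c (member i) ->
  ~~ pure b c -> 12 <= share a b + share a c.
Proof.
move=> eab ebc eac nbc.
have eba := edge_of_sym eab; have ecb := edge_of_sym ebc; have eca := edge_of_sym eac.
have pab : pure a b by rewrite pureC (impure_neighbour_pure ecb eba eca) // pureC.
have pac : pure a c by rewrite pureC (impure_neighbour_pure ebc eca eba).
rewrite (share_mult1 pab (pure_edge_mult1 eab ebc eac pab nbc)).
have ncb : ~~ pure c b by rewrite pureC.
rewrite (share_mult1 pac (pure_edge_mult1 eac ecb eab pac ncb)).
by rewrite /arc_weight; case: (common_nbr pure a b); case: (common_nbr pure a c).
Qed.

Lemma charge_ge i : 24 <= charge i.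
Proof.
have [a [b [c [[ai bi ci] [ab bc ca]]]]] : exists a b c,
    [/\ a \in member i, b \in member i & c \in member i] /\ [/\ a != b, b != c & c != a].
  by apply/card_gt2P; rewrite card_member.
have ac : a != c by rewrite eq_sym.
apply: leq_trans (sum_edge_of_ge shareC ab bc ac ai bi ci).
rewrite -[24]/(2 * 12) leq_pmul2l //.
have eab := edge_of_mem ab ai bi; have ebc := edge_of_mem bc bi ci.
have eac := edge_of_mem ac ai ci.
have eba := edge_of_sym eab; have ecb := edge_of_sym ebc; have eca := edge_of_sym eac.
have [pbc | nbc] := boolP (pure b c); last first.
  exact: leq_trans (shares_impure eab ebc eac nbc) (leq_addr _ _).
have [pac | nac] := boolP (pure a c); last first.
  rewrite addnAC -(shareC b a).
  exact: leq_trans (shares_impure eba eac ebc nac) (leq_addr _ _).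
have [pab | nab] := boolP (pure a b); last first.
  rewrite -addnA -(shareC c a) -(shareC c b).
  exact: leq_trans (shares_impure eca eab ecb nab) (leq_addl _ _).
have pba : pure b a by rewrite pureC.
have pca : pure c a by rewrite pureC.
have pcb : pure c b by rewrite pureC.
rewrite -[12]/(4 + 4 + 4); apply: leq_add; first apply: leq_add.
- exact: share_pure_triangle pab pac pbc.
- exact: share_pure_triangle pac pab pcb.
- exact: share_pure_triangle pbc pba pca.
Qed.

Lemma edge_mult_sum x y : edge_mult x y = \sum_i (edge_of x y (member i) : nat).
Proof.
by rewrite /edge_mult -sum1dep_card big_mkcond; apply: eq_bigr => i _; case: edge_of.
Qed.

Lemma sum_charge : \sum_i charge i <= 2 * (3 * narcs pure + ntriangle_arcs pure).
Proof.
have -> : 3 * narcs pure + ntriangle_arcs pure = \sum_x \sum_y pure x y * arc_weight x y.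
  rewrite big_distrr -big_split; apply: eq_bigr => x _ /=.
  rewrite big_distrr -big_split; apply: eq_bigr => y _ /=.
  by rewrite /arc_weight; case: (pure x y); case: (common_nbr pure x y).
rewrite /charge exchange_big big_distrr /=; apply: leq_sum => x _.
rewrite exchange_big big_distrr /=; apply: leq_sum => y _.
by rewrite -big_distrl -edge_mult_sum edge_mult_share.
Qed.

Lemma rainbow_free_size_bound : 24 * size T <= 3 * n ^ 2 + 8 * n.
Proof.
have charges : 24 * size T <= \sum_i charge i.
  have : \sum_(i < size T) 24 <= \sum_i charge i by apply: leq_sum => i _; apply: charge_ge.
  by rewrite sum_nat_const card_ord mulnC.
have := narcs_bound pureC pure_triangle_uniq; rewrite card_ord.
have := leq_trans charges sum_charge; lia.
Qed.

End RainbowFreeFamily.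

Unset Implicit Arguments.
Local Open Scope ring_scope.

Theorem theorem3p1 (R : realType) (eps : R) (heps : 0 < eps) :
  exists N : nat, forall n : nat, (N <= n)%N ->
    forall T : seq {set 'I_n},
      triangle_family T -> ~ has_rainbow_triangle T ->
      (size T)%:R <= (1 + eps) * ((n%:R) ^+ 2 / 8) :> R.
Proof.
have eps3_ge0 : 0 <= 3 / eps by rewrite divr_ge0 // ltW.
exists (Num.Def.archi_bound (3 / eps)) => n n_ge T T_tri T_nr.
have n_big : 3 < eps * n%:R.
  rewrite mulrC -ltr_pdivrMr //; apply: lt_le_trans (archi_boundP eps3_ge0) _.
  by rewrite ler_nat.
have := rainbow_free_size_bound T_tri T_nr.
rewrite -(ler_nat R) natrD !natrM.
have n_ge0 : 0 <= n%:R :> R := ler0n _ n.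
set m := n%:R in n_big n_ge0 *.
have : 3 * m <= eps * m * m by nra.
nra.
Qed.
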